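(* Let $g,h$ be non-identical linear functions. Then (i) $h\circ g<g\circ h$ if and only if $\theta(h)-\theta(g)\in(0,\pi)_{2\pi}$; and (ii) $h\circ g=g\circ h$ if and only if $\theta(h)-\theta(g)\in\{0,\pi\}_{2\pi}$.
   Context: A linear function is $f(x)=ax+b$, $a,b\in\mathbb{R}$; it is identical if $f(x)=x$. The vector of $f$ is $\vec f=(b,1-a)^\top$ and $\theta(f)\in[0,2\pi)$ is its polar angle ($\theta(f)=\bot$ if $\vec f=0$). For $\theta_1,\theta_2$, $\theta_1=_{2\pi}\theta_2$ means $\theta_1-\theta_2\in2\pi\mathbb{Z}$; $[\theta_1,\theta_2]_{2\pi}=\{\theta\in[\lambda_1,\lambda_2]\mid\lambda_1=_{2\pi}\theta_1,\lambda_2=_{2\pi}\theta_2,\lambda_2-\lambda_1\in[0,2\pi)\}$ with open/half-open analogues, and for a set $S$, $S_{2\pi}=\{\theta\mid\theta=_{2\pi}\lambda\text{ for some }\lambda\in S\}$. For functions, $g<h$ means $g(x)<h(x)$ for all $x$. *)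

From Stdlib Require Import Reals.
Open Scope R_scope.

Definition lin (a b : R) : R -> R := fun x => a * x + b.

Definition identical (f : R -> R) : Prop := forall x, f x = x.

Definition linvec (a b : R) : R * R := (b, 1 - a).

Definition is_polar_angle (v : R * R) (t : R) : Prop :=
  v <> (0, 0) /\ 0 <= t < 2 * PI /\
  fst v = sqrt (fst v ^ 2 + snd v ^ 2) * cos t /\
  snd v = sqrt (fst v ^ 2 + snd v ^ 2) * sin t.

Definition in_mod2pi (S : R -> Prop) (x : R) : Prop :=
  exists k : Z, S (x + 2 * IZR k * PI).

Definition fun_lt (g h : R -> R) : Prop := forall x, g x < h x.

(* Both composites have slope ah ag, and (g o h - h o g) is the constant
   bg (1 - ah) - bh (1 - ag): the cross product of the vectors of g and h.
   Writing these vectors in polar form, the cross product is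
   |g| |h| sin (th - tg), so the comparison of h o g with g o h is the sign
   of sin (th - tg), which is positive exactly on (0, pi) and zero exactly on
   {0, pi} modulo 2 pi. *)
From Stdlib Require Import Reals ZArith Lra Lia.
Open Scope R_scope.

Lemma sin_period_Z (x : R) (k : Z) : sin (x + 2 * IZR k * PI) = sin x.
Proof.
  destruct (Z_le_gt_dec 0 k) as [Hk | Hk].
  - rewrite <- (Z2Nat.id k Hk), <- INR_IZR_INZ. apply sin_period.
  - replace k with (- Z.of_nat (Z.to_nat (- k)))%Z by lia.
    rewrite opp_IZR, <- INR_IZR_INZ.
    rewrite <- (sin_period (x + 2 * - INR (Z.to_nat (- k)) * PI) (Z.to_nat (- k))).
    f_equal; ring.
Qed.

Lemma mod2pi_repr_exists (d : R) : exists k : Z, 0 <= d + 2 * IZR k * PI < 2 * PI.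
Proof.
  pose proof PI_RGT_0 as Hpi.
  exists (- Zfloor (d / (2 * PI)))%Z.
  pose proof (Zfloor_bound (d / (2 * PI))) as [Hlo Hhi].
  set (q := d / (2 * PI)) in *. set (f := IZR (Zfloor q)) in *.
  rewrite opp_IZR; fold f.
  replace (d + 2 * - f * PI) with (2 * PI * (q - f)) by (unfold q; field; lra).
  split; nra.
Qed.

(* Distinct representatives in [0, 2 pi) would differ by a nonzero multiple of
   2 pi, so membership modulo 2 pi is decided by the representative. *)
Lemma in_mod2pi_repr (S : R -> Prop) (d : R) (k : Z) :
  (forall y, S y -> 0 <= y < 2 * PI) -> 0 <= d + 2 * IZR k * PI < 2 * PI ->
  (in_mod2pi S d <-> S (d + 2 * IZR k * PI)).
Proof.
  intros HS Hk. split.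
  - intros [l Hl]. pose proof (HS _ Hl) as Hl'.
    assert (Hkl : l = k).
    { pose proof PI_RGT_0 as Hpi.
      assert (Hdiff : -1 < IZR (l - k) < 1).
      { rewrite minus_IZR. split; apply Rmult_lt_reg_r with (2 * PI); nra. }
      apply one_IZR_lt1 in Hdiff. lia. }
    now subst l.
  - intros Hy. now exists k.
Qed.

Lemma sin_gt0_0_2PI (y : R) : 0 <= y < 2 * PI -> (0 < sin y <-> 0 < y < PI).
Proof.
  intros Hy. split.
  - intros Hs.
    destruct (Req_dec y 0) as [-> | Hy0]; [rewrite sin_0 in Hs; lra |].
    destruct (Rlt_or_le y PI) as [Hlt | Hge]; [lra |].
    destruct (Req_dec y PI) as [-> | HyPI]; [rewrite sin_PI in Hs; lra |].
    pose proof (sin_lt_0 y ltac:(lra) ltac:(lra)). lra.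
  - intros [H0 HPI]. now apply sin_gt_0.
Qed.

Lemma sin_eq0_0_2PI (y : R) : 0 <= y < 2 * PI -> (sin y = 0 <-> y = 0 \/ y = PI).
Proof.
  intros Hy. split.
  - intros Hs. destruct (sin_eq_O_2PI_0 y ltac:(lra) ltac:(lra) Hs) as [H | [H | H]];
      [left | right | lra]; exact H.
  - intros [-> | ->]; [apply sin_0 | apply sin_PI].
Qed.

Lemma sin_gt0_mod2pi (d : R) : 0 < sin d <-> in_mod2pi (fun y => 0 < y < PI) d.
Proof.
  pose proof PI_RGT_0 as Hpi.
  destruct (mod2pi_repr_exists d) as [k Hk].
  rewrite (in_mod2pi_repr _ d k) by (lra || (intros y Hy; lra)).
  rewrite <- (sin_period_Z d k). now apply sin_gt0_0_2PI.
Qed.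

Lemma sin_eq0_mod2pi (d : R) : sin d = 0 <-> in_mod2pi (fun y => y = 0 \/ y = PI) d.
Proof.
  pose proof PI_RGT_0 as Hpi.
  destruct (mod2pi_repr_exists d) as [k Hk].
  rewrite (in_mod2pi_repr _ d k) by (lra || (intros y [-> | ->]; lra)).
  rewrite <- (sin_period_Z d k). now apply sin_eq0_0_2PI.
Qed.

Definition vnorm (v : R * R) : R := sqrt (fst v ^ 2 + snd v ^ 2).

Definition cross (u v : R * R) : R := fst u * snd v - snd u * fst v.

Lemma vnorm_gt0 (v : R * R) : v <> (0, 0) -> 0 < vnorm v.
Proof.
  destruct v as [b c]. unfold vnorm; simpl. intros Hv. apply sqrt_lt_R0.
  destruct (Req_dec b 0) as [-> | Hb].
  - destruct (Req_dec c 0) as [-> | Hc]; [contradiction | nra].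
  - nra.
Qed.

Lemma cross_polar (u v : R * R) (tu tv : R) :
  is_polar_angle u tu -> is_polar_angle v tv ->
  cross u v = vnorm u * vnorm v * sin (tv - tu).
Proof.
  intros [_ [_ [Hu1 Hu2]]] [_ [_ [Hv1 Hv2]]].
  fold (vnorm u) in Hu1, Hu2. fold (vnorm v) in Hv1, Hv2.
  unfold cross. rewrite Hu1, Hu2, Hv1, Hv2, sin_minus. ring.
Qed.

Lemma lin_comm_defect (ag bg ah bh x : R) :
  lin ag bg (lin ah bh x) - lin ah bh (lin ag bg x) = cross (linvec ag bg) (linvec ah bh).
Proof. unfold lin, linvec, cross; simpl. ring. Qed.

Lemma lin_comp_lt_iff (ag bg ah bh : R) :
  fun_lt (fun x => lin ah bh (lin ag bg x)) (fun x => lin ag bg (lin ah bh x))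
  <-> 0 < cross (linvec ag bg) (linvec ah bh).
Proof.
  split.
  - intros H. specialize (H 0). rewrite <- (lin_comm_defect ag bg ah bh 0). lra.
  - intros H x. rewrite <- (lin_comm_defect ag bg ah bh x) in H. lra.
Qed.

Lemma lin_comp_eq_iff (ag bg ah bh : R) :
  (forall x, lin ah bh (lin ag bg x) = lin ag bg (lin ah bh x))
  <-> cross (linvec ag bg) (linvec ah bh) = 0.
Proof.
  split.
  - intros H. specialize (H 0). rewrite <- (lin_comm_defect ag bg ah bh 0). lra.
  - intros H x. rewrite <- (lin_comm_defect ag bg ah bh x) in H. lra.
Qed.

Lemma pos_scale_gt0_iff (c s : R) : 0 < c -> (0 < c * s <-> 0 < s).
Proof. intros Hc. split; intros H; nra. Qed.

Lemma pos_scale_eq0_iff (c s : R) : 0 < c -> (c * s = 0 <-> s = 0).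
Proof. intros Hc. split; intros H; [apply Rmult_integral in H as [H | H]; lra | rewrite H; ring]. Qed.

Theorem mainTheorem6 (ag bg ah bh tg th : R) :
  ~ identical (lin ag bg) -> ~ identical (lin ah bh) ->
  is_polar_angle (linvec ag bg) tg -> is_polar_angle (linvec ah bh) th ->
  (fun_lt (fun x => lin ah bh (lin ag bg x)) (fun x => lin ag bg (lin ah bh x))
     <-> in_mod2pi (fun y => 0 < y < PI) (th - tg)) /\
  ((forall x, lin ah bh (lin ag bg x) = lin ag bg (lin ah bh x))
     <-> in_mod2pi (fun y => y = 0 \/ y = PI) (th - tg)).
Proof.
  intros _ _ Hg Hh.
  assert (Hnorms : 0 < vnorm (linvec ag bg) * vnorm (linvec ah bh)).
  { apply Rmult_lt_0_compat; apply vnorm_gt0; [apply Hg | apply Hh]. }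
  rewrite lin_comp_lt_iff, lin_comp_eq_iff, (cross_polar _ _ _ _ Hg Hh).
  rewrite pos_scale_gt0_iff, pos_scale_eq0_iff by exact Hnorms.
  split; [apply sin_gt0_mod2pi | apply sin_eq0_mod2pi].
Qed.
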